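(* Let $R$ be a ring, let $*\in\{l,\emptyset\}$, and let $S\in\mathbb{L}_*(R,\mathfrak{a})$. Let $\overline{R}=R/\mathfrak{a}$, $\pi:R\to\overline{R}$, $r\mapsto\overline{r}=r+\mathfrak{a}$, and $\overline{S}=\pi(S)$. Then: \begin{enumerate} \item $\overline{S}\in\mathrm{Den}_*(\overline{R},0)$. \item The ring $R\langle S^{-1}\rangle$ is $R$-isomorphic to $\overline{S}^{-1}\overline{R}$. \item Let $\mathfrak{b}$ be an ideal of $R$, $\pi^\dagger:R\to R^\dagger=R/\mathfrak{b}$, $r\mapsto r^\dagger=r+\mathfrak{b}$. If $S^\dagger=\pi^\dagger(S)\in\mathrm{Den}_*(R^\dagger,0)$ then $\mathfrak{a}\subseteq\mathfrak{b}$ and the map $\overline{S}^{-1}\overline{R}\to {S^\dagger}^{-1}R^\dagger$, $\overline{s}^{-1}\overline{r}\mapsto {s^\dagger}^{-1}r^\dagger$ is a ring epimorphism with kernel $\overline{S}^{-1}(\mathfrak{b}/\mathfrak{a})=\{\overline{s}^{-1}(b+\mathfrak{a}):s\in S,b\in\mathfrak{b}\}$. So $\mathfrak{a}$ is the least ideal $\mathfrak{c}$ of $R$ such that $(S+\mathfrak{c})/\mathfrak{c}\in\mathrm{Den}_*(R/\mathfrak{c},0)$. \item Let $f:R\to Q$ be a ring homomorphism such that $f(S)\subseteq Q^\times$ and $Q$ is generated by $f(R)$ and $\{f(s)^{-1}:s\in S\}$. Then \begin{enumerate} \item $\mathfrak{a}\subseteq\ker(f)$, the map $\overline{S}^{-1}\overline{R}\to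 Q$, $\overline{s}^{-1}\overline{r}\mapsto f(s)^{-1}f(r)$ is a ring epimorphism with kernel $\overline{S}^{-1}(\ker(f)/\mathfrak{a})$, and $Q=\{f(s)^{-1}f(r):s\in S,r\in R\}$; \item with $\widetilde{R}=R/\ker(f)$ and $\widetilde{\pi}:R\to\widetilde{R}$ the natural map, $\widetilde{S}:=\widetilde{\pi}(S)\in\mathrm{Den}_l(\widetilde{R},0)$ and $\widetilde{S}^{-1}\widetilde{R}\simeq Q$, an $\widetilde{R}$-isomorphism. \end{enumerate} \end{enumerate}
   Context: Rings are associative with $1$; $Q^\times$ is the group of units. A multiplicative set $S\subseteq R$ satisfies $SS\subseteq S$, $1\in S$, $0\notin S$. $R\langle S^{-1}\rangle=R\langle X_S\rangle/I_S$, where $R\langle X_S\rangle$ is the ring freely generated by $R$ and noncommuting indeterminates $x_s$ ($s\in S$) and $I_S$ is the ideal generated by $sx_s-1,x_ss-1$ ($s\in S$); $\mathrm{ass}_R(S)$ is the kernel of $R\to R\langle S^{-1}\rangle$. $S$ is left localizable if $R\langle S^{-1}\rangle\ne0$ and every element of it is $(x_s+I_S)(r+I_S)$ for some $s\in S,r\in R$; right localizable similarly with $(r+I_S)(x_s+I_S)$; localizable if both. $\mathbb{L}_l(R)$, $\mathbb{L}_r(R)$, $\mathbb{L}_\emptyset(R)=\mathbb{L}(R)$ denote these sets, and $\mathbb{L}_*(R,\mathfrak{a})=\{S\in\mathbb{L}_*(R):\mathrm{ass}_R(S)=\mathfrak{a}\}$. A left Ore set is a multiplicative set $S$ with $Sr\cap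 Rs\ne\emptyset$ for all $r\in R,s\in S$; it is a left denominator set if moreover $rs=0$ ($r\in R,s\in S$) implies $tr=0$ for some $t\in S$; right versions are symmetric; a denominator set is left and right. $\mathrm{Den}_*(A,0)$ is the set of $*$ denominator sets of $A$ consisting of regular elements, and $T^{-1}A$ denotes the usual (Ore) localization. For ring homomorphisms $\nu_A:R\to A$, $\nu_B:R\to B$, a homomorphism $f:A\to B$ is an $R$-homomorphism if $\nu_B=f\nu_A$. *)

From HB Require Import structures.
From mathcomp Require Import all_boot all_order all_algebra.
Set Implicit Arguments. Unset Strict Implicit. Unset Printing Implicit Defensive.
Import GRing.Theory.
Local Open Scope ring_scope.

Definition mult_set (A : pzRingType) (T : A -> Prop) : Prop :=
  [/\ forall x y, T x -> T y -> T (x * y), T 1 & ~ T 0].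

Definition ideal_of (A : pzRingType) (c : A -> Prop) : Prop :=
  [/\ c 0, forall x y, c x -> c y -> c (x - y)
    & forall r x, c x -> c (r * x) /\ c (x * r)].

Definition img (A B : Type) (pi : A -> B) (T : A -> Prop) : B -> Prop :=
  fun y => exists x, T x /\ pi x = y.

Definition surj (A B : Type) (f : A -> B) : Prop := forall y, exists x, f x = y.

(* u is the (two-sided) inverse of x in Q; x \in Q^x iff such u exists *)
Definition is_inverse (Q : pzRingType) (u x : Q) : Prop := u * x = 1 /\ x * u = 1.

Definition subring_closedP (Q : pzRingType) (P : Q -> Prop) : Prop :=
  [/\ P 0, P 1, forall x y, P x -> P y -> P (x - y)
    & forall x y, P x -> P y -> P (x * y)].

Definition ring_generated_by (Q : pzRingType) (G : Q -> Prop) : Prop :=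
  forall P : Q -> Prop, subring_closedP P -> (forall x, G x -> P x) ->
    forall q, P q.

Definition left_ore (A : pzRingType) (T : A -> Prop) : Prop :=
  mult_set T /\
  forall (r s : A), T s -> exists (s' r' : A), T s' /\ s' * r = r' * s.

Definition right_ore (A : pzRingType) (T : A -> Prop) : Prop :=
  mult_set T /\
  forall (r s : A), T s -> exists (s' r' : A), T s' /\ r * s' = s * r'.

Definition left_den (A : pzRingType) (T : A -> Prop) : Prop :=
  left_ore T /\
  forall (r s : A), T s -> r * s = 0 -> exists t, T t /\ t * r = 0.

Definition right_den (A : pzRingType) (T : A -> Prop) : Prop :=
  right_ore T /\
  forall (r s : A), T s -> s * r = 0 -> exists t, T t /\ r * t = 0.

Definition den (A : pzRingType) (T : A -> Prop) : Prop :=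
  left_den T /\ right_den T.

Inductive lstar : Type := star_l | star_empty.

Definition Den (st : lstar) (A : pzRingType) (T : A -> Prop) : Prop :=
  (match st with star_l => left_den T | star_empty => den T end) /\
  (forall s, T s -> GRing.lreg s /\ GRing.rreg s).

(* ---------- the usual (Ore) localization T^{-1}A ----------
   sigma : A -> Q is a left ring of fractions of A w.r.t. T
   (Q "is" T^{-1}A with its canonical map sigma):
   sigma(T) consists of units, every element is sigma(t)^{-1} sigma(a),
   and ker sigma = {a | t a = 0 for some t \in T}. *)
Definition left_fractions (A Q : pzRingType) (T : A -> Prop)
  (sigma : {rmorphism A -> Q}) : Prop :=
  [/\ forall t, T t -> exists u, is_inverse u (sigma t),
      forall q, exists t a u, [/\ T t, is_inverse u (sigma t) & q = u * sigma a]
    & forall a, sigma a = 0 <-> exists t, T t /\ t * a = 0].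

(* ---------- universal localization R<S^{-1}> = R<X_S>/I_S ----------
   Terms of the ring generated by R and noncommuting indeterminates x_s
   (s \in S); [req] is the ring congruence generated by the ring axioms,
   the relations of R (tC is a ring morphism), and s x_s = 1 = x_s s.
   The quotient of rterm by req is R<S^{-1}>. *)
Inductive rterm (R : Type) (S : R -> Prop) : Type :=
| tC of R
| tX of {s : R | S s}
| t0
| t1
| tAdd of rterm S & rterm S
| tOpp of rterm S
| tMul of rterm S & rterm S.

Arguments tC {R S}.
Arguments tX {R S}.
Arguments t0 {R S}.
Arguments t1 {R S}.
Arguments tAdd {R S}.
Arguments tOpp {R S}.
Arguments tMul {R S}.

Inductive req (R : pzRingType) (S : R -> Prop) : rterm S -> rterm S -> Prop :=
| req_refl t : req t t
| req_sym t u : req t u -> req u t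
| req_trans t u v : req t u -> req u v -> req t v
| req_add t t' u u' : req t t' -> req u u' -> req (tAdd t u) (tAdd t' u')
| req_opp t t' : req t t' -> req (tOpp t) (tOpp t')
| req_mul t t' u u' : req t t' -> req u u' -> req (tMul t u) (tMul t' u')
| req_addA t u v : req (tAdd t (tAdd u v)) (tAdd (tAdd t u) v)
| req_addC t u : req (tAdd t u) (tAdd u t)
| req_add0 t : req (tAdd t0 t) t
| req_addN t : req (tAdd (tOpp t) t) t0
| req_mulA t u v : req (tMul t (tMul u v)) (tMul (tMul t u) v)
| req_mul1l t : req (tMul t1 t) t
| req_mul1r t : req (tMul t t1) t
| req_mulDl t u v : req (tMul (tAdd t u) v) (tAdd (tMul t v) (tMul u v))
| req_mulDr t u v : req (tMul t (tAdd u v)) (tAdd (tMul t u) (tMul t v))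
| req_C0 : req (tC 0) t0
| req_C1 : req (tC 1) t1
| req_CD a b : req (tC (a + b)) (tAdd (tC a) (tC b))
| req_CN a : req (tC (- a)) (tOpp (tC a))
| req_CM a b : req (tC (a * b)) (tMul (tC a) (tC b))
| req_sx (s : {s : R | S s}) : req (tMul (tC (sval s)) (tX s)) t1
| req_xs (s : {s : R | S s}) : req (tMul (tX s) (tC (sval s))) t1.

Definition ass (R : pzRingType) (S : R -> Prop) (r : R) : Prop :=
  req (tC r : rterm S) t0.

Definition uloc_nonzero (R : pzRingType) (S : R -> Prop) : Prop :=
  ~ req (t1 : rterm S) t0.

Definition left_localizable (R : pzRingType) (S : R -> Prop) : Prop :=
  [/\ mult_set S, uloc_nonzero S &
      forall t : rterm S, exists s r, req t (tMul (tX s) (tC r))].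

Definition right_localizable (R : pzRingType) (S : R -> Prop) : Prop :=
  [/\ mult_set S, uloc_nonzero S &
      forall t : rterm S, exists s r, req t (tMul (tC r) (tX s))].

Definition in_L (st : lstar) (R : pzRingType) (S : R -> Prop) (a : R -> Prop) : Prop :=
  (match st with
   | star_l => left_localizable S
   | star_empty => left_localizable S /\ right_localizable S end) /\
  (forall r, a r <-> ass S r).

(* g, acting on terms, induces an R-isomorphism R<S^{-1}> -> Q, where Q is an
   R-ring via nu : R -> Q: it respects and reflects req, is onto, is a ring
   homomorphism, and g(r + I_S) = nu r. *)
Definition uloc_R_iso (R Q : pzRingType) (S : R -> Prop)
  (nu : R -> Q) (g : rterm S -> Q) : Prop :=
  [/\ forall t u, req t u <-> g t = g u,
      forall q, exists t, g t = q,
      g t0 = 0 /\ g t1 = 1,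
      forall t u, [/\ g (tAdd t u) = g t + g u, g (tOpp t) = - g t
                     & g (tMul t u) = g t * g u]
    & forall r, g (tC r) = nu r].

(* Let a = ass_R(S).  Left localizability writes r x_s = x_s' r' in R<S^-1>,
   i.e. s' r = r' s modulo a, and s x_s = 1 = x_s s makes the elements of S
   cancellable modulo a; so S + a is a denominator set of regular elements of
   R/a.  By the universal property of Ore localization, a ring homomorphism f
   inverting S and killing a factors through this ring of left fractions as
   s^-1 r |-> f(s)^-1 f(r), and its kernel consists of the fractions whose
   numerator is killed by f.
   Minimality of a: if S + b is a left denominator set of regular elements of
   R/b, the left fractions over R/b form a left module over R<X_S> (r acts by
   left multiplication, x_s by s^-1) on which the defining relations of
   R<S^-1> hold, so every element of a kills the fraction 1, i.e. lies in b. *)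

From HB Require Import structures.
From mathcomp Require Import all_boot all_order all_algebra.
From Stdlib Require Import Setoid Morphisms ClassicalEpsilon ProofIrrelevance.
Set Implicit Arguments. Unset Strict Implicit. Unset Printing Implicit Defensive.
Import GRing.Theory.
Local Open Scope ring_scope.

Add Parametric Relation (R : pzRingType) (S : R -> Prop) : (rterm S) (@req R S)
  reflexivity proved by (@req_refl R S)
  symmetry proved by (@req_sym R S)
  transitivity proved by (@req_trans R S) as req_rel.

Add Parametric Morphism (R : pzRingType) (S : R -> Prop) : (@tAdd R S)
  with signature (@req R S) ==> (@req R S) ==> (@req R S) as tAdd_mor.
Proof. by move=> *; apply: req_add. Qed.

Add Parametric Morphism (R : pzRingType) (S : R -> Prop) : (@tMul R S)
  with signature (@req R S) ==> (@req R S) ==> (@req R S) as tMul_mor.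
Proof. by move=> *; apply: req_mul. Qed.

Add Parametric Morphism (R : pzRingType) (S : R -> Prop) : (@tOpp R S)
  with signature (@req R S) ==> (@req R S) as tOpp_mor.
Proof. by move=> *; apply: req_opp. Qed.

#[local] Hint Resolve req_refl : core.

Section UniversalLocalization.

Variables (R : pzRingType) (S : R -> Prop).
Implicit Types (t u : rterm S) (r s x y : R).

Lemma req_addr0 t : req (tAdd t t0) t.
Proof. by rewrite req_addC req_add0. Qed.

Lemma req_subrr t : req (tAdd t (tOpp t)) t0.
Proof. by rewrite req_addC req_addN. Qed.

Lemma req_opp0 : req (tOpp t0 : rterm S) t0.
Proof. by rewrite -[X in req _ X](req_addN t0) req_addr0. Qed.

Lemma req_subr_eq0 t u : req (tAdd t (tOpp u)) t0 -> req t u.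
Proof.
move=> tu0; rewrite -[t]req_addr0 -(req_addN u) req_addA tu0; exact: req_add0.
Qed.

Lemma req_addxx_eq0 t : req (tAdd t t) t -> req t t0.
Proof.
move=> tt; transitivity (tAdd (tOpp t) (tAdd t t)).
  by rewrite req_addA req_addN req_add0.
by rewrite tt req_addN.
Qed.

Lemma req_mul0r t : req (tMul t0 t) t0.
Proof. by apply: req_addxx_eq0; rewrite -req_mulDl req_add0. Qed.

Lemma req_mulr0 t : req (tMul t t0) t0.
Proof. by apply: req_addxx_eq0; rewrite -req_mulDr req_add0. Qed.

Lemma req_CX s (Ss : S s) : req (tMul (tC s) (tX (exist S s Ss))) t1.
Proof. exact: (req_sx (exist S s Ss)). Qed.

Lemma req_XC s (Ss : S s) : req (tMul (tX (exist S s Ss)) (tC s)) t1.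
Proof. exact: (req_xs (exist S s Ss)). Qed.

Lemma req_lcancel s (Ss : S s) t : req (tMul (tC s) t) t0 -> req t t0.
Proof.
move=> st0; rewrite -[t]req_mul1l -(req_XC Ss) -req_mulA st0; exact: req_mulr0.
Qed.

Lemma req_rcancel s (Ss : S s) t : req (tMul t (tC s)) t0 -> req t t0.
Proof.
move=> ts0; rewrite -[t]req_mul1r -(req_CX Ss) req_mulA ts0; exact: req_mul0r.
Qed.

Lemma ass_ideal : ideal_of (ass S).
Proof.
rewrite /ass; split=> [|x y ax ay|r x ax]; first exact: req_C0.
  by rewrite req_CD req_CN ax ay req_opp0 req_add0.
by rewrite !req_CM ax req_mulr0 req_mul0r.
Qed.

Lemma ass_mulSl s r : S s -> ass S (s * r) -> ass S r.
Proof. by rewrite /ass req_CM => Ss; apply: req_lcancel. Qed.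

Lemma ass_mulSr s r : S s -> ass S (r * s) -> ass S r.
Proof. by rewrite /ass req_CM => Ss; apply: req_rcancel. Qed.

Lemma S_notin_ass s : uloc_nonzero S -> S s -> ~ ass S s.
Proof.
rewrite /ass => nz Ss s0; apply: nz.
by rewrite -(req_XC Ss) s0 req_mulr0.
Qed.

Lemma ass_subr_of_req x y : req (tC x : rterm S) (tC y) -> ass S (x - y).
Proof. by rewrite /ass req_CD req_CN => ->; apply: req_subrr. Qed.

(* s' r = s' (r x_s) s = s' (x_s' r') s = r' s *)
Lemma left_localizable_ore : left_localizable S ->
  forall r s, S s -> exists s' r', S s' /\ ass S (s' * r - r' * s).
Proof.
case=> _ _ loc r s Ss.
have [[s' Ss'] [r' rx]] := loc (tMul (tC r) (tX (exist S s Ss))).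
exists s', r'; split=> //; apply: ass_subr_of_req; rewrite !req_CM.
rewrite -[tC r]req_mul1r -(req_XC Ss) (req_mulA (tC r)) rx.
by rewrite !req_mulA req_CX req_mul1l.
Qed.

Lemma right_localizable_ore : right_localizable S ->
  forall r s, S s -> exists s' r', S s' /\ ass S (r * s' - s * r').
Proof.
case=> _ _ loc r s Ss.
have [[s' Ss'] [r' xr]] := loc (tMul (tX (exist S s Ss)) (tC r)).
exists s', r'; split=> //; apply: ass_subr_of_req; rewrite !req_CM.
rewrite -[tC r]req_mul1l -(req_CX Ss) -(req_mulA (tC s)) xr.
by rewrite -!req_mulA req_XC req_mul1r.
Qed.

Section Evaluation.

Variables (P : pzRingType) (g : {rmorphism R -> P}) (iv : R -> P).

Fixpoint eval_term t : P :=
  match t with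
  | tC r => g r
  | tX s => iv (sval s)
  | t0 => 0
  | t1 => 1
  | tAdd t u => eval_term t + eval_term u
  | tOpp t => - eval_term t
  | tMul t u => eval_term t * eval_term u
  end.

Hypothesis iv_inverse : forall s, S s -> is_inverse (iv s) (g s).

Lemma eval_term_req t u : req t u -> eval_term t = eval_term u.
Proof.
elim=> {t u} /=; try by move=> *; congruence.
all: try by move=> *; rewrite ?(addrA, add0r, addNr, mulrA, mul1r, mulr1, mulrDl,
  mulrDr, rmorph0, rmorph1, rmorphD, rmorphN, rmorphM).
- by move=> *; apply: addrC.
- by case=> s Ss /=; case: (iv_inverse Ss).
- by case=> s Ss /=; case: (iv_inverse Ss).
Qed.

End Evaluation.

End UniversalLocalization.

Section Inverses.

Variable P : pzRingType.
Implicit Types u v w x y : P.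

Lemma is_inverse_sym u x : is_inverse u x -> is_inverse x u.
Proof. by case. Qed.

Lemma is_inverse1 : is_inverse (1 : P) 1.
Proof. by split; rewrite mulr1. Qed.

Lemma is_inverse_uniq u v x : is_inverse u x -> is_inverse v x -> u = v.
Proof. by move=> [ux xu] [vx xv]; rewrite -[u]mulr1 -xv mulrA ux mul1r. Qed.

Lemma is_inverse_mulr_eq0 v x y : is_inverse v x -> x * y = 0 -> y = 0.
Proof. by move=> [vx _] xy0; rewrite -[y]mul1r -vx -mulrA xy0 mulr0. Qed.

Lemma is_inverse_mull_eq0 v x y : is_inverse v x -> y * x = 0 -> y = 0.
Proof. by move=> [_ xv] yx0; rewrite -[y]mulr1 -xv mulrA yx0 mul0r. Qed.

Lemma linv_mul_rinv w x y v : w * (x * y) = 1 -> y * v = 1 -> w * x = v.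
Proof. by move=> wxy yv; rewrite -[w * x]mulr1 -yv mulrA -(mulrA w) wxy mul1r. Qed.

Lemma inverse_common_multiple U u1 u2 c d t1 t2 :
  is_inverse U (c * t1) -> is_inverse u1 t1 -> is_inverse u2 t2 ->
  c * t1 = d * t2 -> U * c = u1 /\ U * d = u2.
Proof.
move=> [Uct _] [_ tu1] [_ tu2] cd; split; first exact: linv_mul_rinv Uct tu1.
by apply: linv_mul_rinv tu2; rewrite -cd.
Qed.

(* t1^-1 a1 t2^-1 = (c t1)^-1 d  when  c a1 = d t2 *)
Lemma inverse_ore_swap U u1 u2 c d t1 t2 a1 :
  is_inverse U (c * t1) -> is_inverse u1 t1 -> is_inverse u2 t2 ->
  c * a1 = d * t2 -> U * d = u1 * a1 * u2.
Proof.
move=> [Uct _] [_ tu1] [_ tu2] cd.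
by rewrite -[U * d]mulr1 -tu2 mulrA -(mulrA U) -cd mulrA (linv_mul_rinv Uct tu1).
Qed.

Definition inv_of x : P := epsilon (inhabits 0) (fun v => is_inverse v x).

Lemma inv_ofP x : (exists v, is_inverse v x) -> is_inverse (inv_of x) x.
Proof. exact: epsilon_spec. Qed.

End Inverses.

Lemma rmorph_of (A B : pzRingType) (f : A -> B) :
  GRing.nmod_morphism f -> GRing.monoid_morphism f ->
  exists g : {rmorphism A -> B}, g =1 f.
Proof.
move=> fD fM.
by exists (HB.pack_for {rmorphism A -> B} f
  (GRing.isNmodMorphism.Build A B f fD) (GRing.isMonoidMorphism.Build A B f fM)).
Qed.

Lemma rmorph_factor (A B C : pzRingType) (p : {rmorphism A -> B})
  (g : {rmorphism A -> C}) :
  surj p -> (forall a, p a = 0 -> g a = 0) ->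
  exists h : {rmorphism B -> C}, forall a, h (p a) = g a.
Proof.
move=> p_surj p_ker.
pose pre y := epsilon (inhabits 0) (fun x => p x = y).
have preK y : p (pre y) = y by apply: (epsilon_spec (inhabits 0) (fun x => p x = y)).
have gpre a : g (pre (p a)) = g a.
  by apply/eqP; rewrite -subr_eq0 -rmorphB; apply/eqP/p_ker; rewrite rmorphB preK subrr.
have [h hE] : exists h : {rmorphism B -> C}, h =1 g \o pre.
  apply: (@rmorph_of _ _ (g \o pre)); split=> [|x y] /=.
  - by rewrite -(rmorph0 p) gpre rmorph0.
  - by rewrite -(preK x) -(preK y) -rmorphD !gpre rmorphD.
  - by rewrite -(rmorph1 p) gpre rmorph1.
  - by rewrite -(preK x) -(preK y) -rmorphM !gpre rmorphM.
by exists h => a; rewrite hE /= gpre.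
Qed.

Lemma left_ore1 (A : pzRingType) (T : A -> Prop) : left_ore T -> T 1.
Proof. by case=> [[]]. Qed.

Lemma left_oreM (A : pzRingType) (T : A -> Prop) :
  left_ore T -> forall x y, T x -> T y -> T (x * y).
Proof. by case=> [[TM _ _] _]. Qed.

Lemma Den_left_den st (A : pzRingType) (T : A -> Prop) :
  Den st T -> left_den T /\ (forall t, T t -> GRing.lreg t /\ GRing.rreg t).
Proof. by case: st => [[]|[[]]]. Qed.

Lemma inj_surj_bijective (A B : Type) (x0 : A) (f : A -> B) :
  injective f -> surj f -> bijective f.
Proof.
move=> f_inj f_surj.
pose g y := epsilon (inhabits x0) (fun x => f x = y).
have gK y : f (g y) = y by apply: (epsilon_spec (inhabits x0) (fun x => f x = y)).
by exists g => [x|y]; [apply: f_inj; rewrite gK | apply: gK].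
Qed.

Lemma ideal_of_iff (A : pzRingType) (c c' : A -> Prop) :
  (forall x, c x <-> c' x) -> ideal_of c -> ideal_of c'.
Proof.
move=> cc' [c0 cB cM]; split=> [|x y /cc' cx /cc' cy|r x /cc' /(cM r) [crx cxr]].
- exact/cc'.
- exact/cc'/cB.
- by split; apply/cc'.
Qed.

Section LeftFractionsLift.

Variables (A Q P : pzRingType) (T : A -> Prop).
Variables (sg : {rmorphism A -> Q}) (h : {rmorphism A -> P}).
Hypothesis T_ore : left_ore T.
Hypothesis sg_frac : left_fractions T sg.
Hypothesis h_unit : forall t, T t -> exists v, is_inverse v (h t).

Let T1 : T 1 := left_ore1 T_ore.
Let T_mul x y : T x -> T y -> T (x * y) := @left_oreM A T T_ore x y.
Let sg_unit t : T t -> exists u, is_inverse u (sg t).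
Proof. by case: sg_frac => unit _ _; apply: unit. Qed.

Let rmorph_mul_eq (X : pzRingType) (k : {rmorphism A -> X}) c d x y :
  c * x = d * y -> k c * k x = k d * k y.
Proof. by rewrite -!rmorphM => ->. Qed.

Let rmorph_unitM (X : pzRingType) (k : {rmorphism A -> X}) U x y :
  is_inverse U (k (x * y)) -> is_inverse U (k x * k y).
Proof. by rewrite rmorphM. Qed.

Lemma h_of_sg_eq0 a : sg a = 0 -> h a = 0.
Proof.
case: sg_frac => _ _ sg_ker /sg_ker [t [Tt ta0]].
have [v hv] := h_unit Tt.
by apply: is_inverse_mulr_eq0 hv _; rewrite -rmorphM ta0 rmorph0.
Qed.

Lemma lift_welldef t a u v t' a' u' v' : T t -> T t' ->
  is_inverse u (sg t) -> is_inverse v (h t) ->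
  is_inverse u' (sg t') -> is_inverse v' (h t') ->
  u * sg a = u' * sg a' -> v * h a = v' * h a'.
Proof.
move=> Tt Tt' Hu Hv Hu' Hv' E.
have [c [d [Tc cd]]] := proj2 T_ore t t' Tt'.
have [U /rmorph_unitM HU] := sg_unit (T_mul Tc Tt).
have [W /rmorph_unitM HW] := h_unit (T_mul Tc Tt).
have [Uc Ud] := inverse_common_multiple HU Hu Hu' (rmorph_mul_eq sg cd).
have [Wc Wd] := inverse_common_multiple HW Hv Hv' (rmorph_mul_eq h cd).
have sg0 : sg (c * a - d * a') = 0.
  apply: (is_inverse_mulr_eq0 (is_inverse_sym HU)).
  by rewrite rmorphB !rmorphM mulrBr !mulrA Uc Ud E subrr.
apply/eqP; rewrite -subr_eq0 -Wc -Wd -!mulrA -mulrBr -!rmorphM -rmorphB.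
by rewrite h_of_sg_eq0 // mulr0.
Qed.

Lemma left_fraction_repr q :
  exists t a u v, [/\ T t, is_inverse u (sg t), is_inverse v (h t) & q = u * sg a].
Proof.
case: sg_frac => _ /(_ q) [t [a [u [Tt Hu ->]]]] _.
by have [v Hv] := h_unit Tt; exists t, a, u, v.
Qed.

Let lift_rep q : A * A :=
  epsilon (inhabits (0, 0))
    (fun p => T p.1 /\ exists u, is_inverse u (sg p.1) /\ q = u * sg p.2).

Let lift_repP q :
  T (lift_rep q).1 /\ exists u, is_inverse u (sg (lift_rep q).1) /\ q = u * sg (lift_rep q).2.
Proof.
apply: (epsilon_spec (inhabits (0, 0))
  (fun p => T p.1 /\ exists u, is_inverse u (sg p.1) /\ q = u * sg p.2)).
have [t [a [u [v [Tt Hu _ ->]]]]] := left_fraction_repr q.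
by exists (t, a); split=> //; exists u.
Qed.

Let lift q : P := inv_of (h (lift_rep q).1) * h (lift_rep q).2.

Let liftE t a u v : T t -> is_inverse u (sg t) -> is_inverse v (h t) ->
  lift (u * sg a) = v * h a.
Proof.
move=> Tt Hu Hv; have [Tr [u' [Hu' E]]] := lift_repP (u * sg a).
by apply: lift_welldef Tr Tt Hu' (inv_ofP (h_unit Tr)) Hu Hv _; rewrite -E.
Qed.

Let lift_sg a : lift (sg a) = h a.
Proof.
have unit1 (X : pzRingType) (k : {rmorphism A -> X}) : is_inverse 1 (k 1).
  by rewrite rmorph1; apply: is_inverse1.
by rewrite -[sg a]mul1r (liftE _ T1 (unit1 _ sg) (unit1 _ h)) mul1r.
Qed.

Let liftD q1 q2 : lift (q1 + q2) = lift q1 + lift q2.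
Proof.
have [t1 [a1 [u1 [v1 [Tt1 Hu1 Hv1 ->]]]]] := left_fraction_repr q1.
have [t2 [a2 [u2 [v2 [Tt2 Hu2 Hv2 ->]]]]] := left_fraction_repr q2.
have [c [d [Tc cd]]] := proj2 T_ore t1 t2 Tt2.
have Tw := T_mul Tc Tt1.
have [U HU] := sg_unit Tw; have [W HW] := h_unit Tw.
have [Uc Ud] := inverse_common_multiple (rmorph_unitM HU) Hu1 Hu2 (rmorph_mul_eq sg cd).
have [Wc Wd] := inverse_common_multiple (rmorph_unitM HW) Hv1 Hv2 (rmorph_mul_eq h cd).
have -> : u1 * sg a1 + u2 * sg a2 = U * sg (c * a1 + d * a2).
  by rewrite rmorphD !rmorphM mulrDr !mulrA Uc Ud.
rewrite (liftE _ Tw HU HW) (liftE _ Tt1 Hu1 Hv1) (liftE _ Tt2 Hu2 Hv2).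
by rewrite rmorphD !rmorphM mulrDr !mulrA Wc Wd.
Qed.

Let liftM q1 q2 : lift (q1 * q2) = lift q1 * lift q2.
Proof.
have [t1 [a1 [u1 [v1 [Tt1 Hu1 Hv1 ->]]]]] := left_fraction_repr q1.
have [t2 [a2 [u2 [v2 [Tt2 Hu2 Hv2 ->]]]]] := left_fraction_repr q2.
have [c [d [Tc cd]]] := proj2 T_ore a1 t2 Tt2.
have Tw := T_mul Tc Tt1.
have [U HU] := sg_unit Tw; have [W HW] := h_unit Tw.
have Ud := inverse_ore_swap (rmorph_unitM HU) Hu1 Hu2 (rmorph_mul_eq sg cd).
have Wd := inverse_ore_swap (rmorph_unitM HW) Hv1 Hv2 (rmorph_mul_eq h cd).
have -> : u1 * sg a1 * (u2 * sg a2) = U * sg (d * a2) by rewrite rmorphM [RHS]mulrA Ud !mulrA.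
rewrite (liftE _ Tw HU HW) (liftE _ Tt1 Hu1 Hv1) (liftE _ Tt2 Hu2 Hv2).
by rewrite rmorphM mulrA Wd !mulrA.
Qed.

Lemma left_fractions_lift : exists phi : {rmorphism Q -> P},
  forall t a u v, T t -> is_inverse u (sg t) -> is_inverse v (h t) ->
    phi (u * sg a) = v * h a.
Proof.
have [phi phiE] : exists phi : {rmorphism Q -> P}, phi =1 lift.
  apply: rmorph_of; split=> [|q1 q2].
  - by rewrite -(rmorph0 sg) lift_sg rmorph0.
  - exact: liftD.
  - by rewrite -(rmorph1 sg) lift_sg rmorph1.
  - exact: liftM.
by exists phi => t a u v Tt Hu Hv; rewrite phiE (liftE _ Tt Hu Hv).
Qed.

End LeftFractionsLift.

Section OreFractions.

Variables (A : pzRingType) (T : A -> Prop).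
Hypothesis T_ore : left_ore T.
Hypothesis T_reg : forall t, T t -> GRing.lreg t /\ GRing.rreg t.

Let T1 : T 1 := left_ore1 T_ore.
Let T_mul x y : T x -> T y -> T (x * y) := @left_oreM A T T_ore x y.

Let lregT t : T t -> GRing.lreg t. Proof. by case/T_reg. Qed.
Let rregT t : T t -> GRing.rreg t. Proof. by case/T_reg. Qed.

Lemma ore_pair r s : T s -> exists p : A * A, T p.1 /\ p.1 * r = p.2 * s.
Proof. by move/(proj2 T_ore r) => [s' [r' e]]; exists (s', r'). Qed.

Definition ore_pick r s (Ts : T s) : A * A :=
  sval (constructive_indefinite_description _ (ore_pair r Ts)).

Lemma ore_pickP r s (Ts : T s) :
  T (ore_pick r Ts).1 /\ (ore_pick r Ts).1 * r = (ore_pick r Ts).2 * s.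
Proof. by rewrite /ore_pick; case: constructive_indefinite_description. Qed.

(* [Frac a (_ : T s)] stands for the left fraction s^-1 a; [frac_eq] is the
   equality of the ring of fractions, stated without choosing a common
   denominator. *)
Record frac := Frac { fden : A; fnum : A; fden_T : T fden }.

Definition frac_eq (m n : frac) : Prop :=
  forall c d, c * fden m = d * fden n -> c * fnum m = d * fnum n.

Local Infix "≈" := frac_eq (at level 70).

Lemma frac_eq_refl m : m ≈ m.
Proof. by move=> c d /(rregT (fden_T m)) ->. Qed.

Lemma frac_eq_sym m n : m ≈ n -> n ≈ m.
Proof. by move=> mn c d /esym /mn /esym. Qed.

Lemma frac_eq_trans m n k : m ≈ n -> n ≈ k -> m ≈ k.
Proof.
move=> mn nk c d cd.
have [g [h [Tg gh]]] := proj2 T_ore (c * fden m) (fden n) (fden_T n).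
apply: (lregT Tg); rewrite !mulrA.
rewrite (mn (g * c) h); last by rewrite -mulrA.
by rewrite (nk h (g * d)) // -gh cd mulrA.
Qed.

Add Relation frac frac_eq
  reflexivity proved by frac_eq_refl
  symmetry proved by frac_eq_sym
  transitivity proved by frac_eq_trans as frac_eq_rel.

#[local] Hint Resolve frac_eq_refl : core.

Lemma frac_eqP m n c d : T (c * fden m) ->
  c * fden m = d * fden n -> c * fnum m = d * fnum n -> m ≈ n.
Proof.
move=> Tc cd cdn e f ef.
have [g [h [Tg gh]]] := proj2 T_ore (e * fden m) _ Tc.
have ge : g * e = h * c by apply: (rregT (fden_T m)); rewrite -!mulrA.
have gf : g * f = h * d.
  by apply: (rregT (fden_T n)); rewrite -!mulrA -ef -cd.
by apply: (lregT Tg); rewrite !mulrA ge gf -!mulrA cdn.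
Qed.

Lemma frac_eq_common m n : m ≈ n ->
  exists c d, [/\ T (c * fden m), c * fden m = d * fden n & c * fnum m = d * fnum n].
Proof.
move=> mn; have [c [d [Tc cd]]] := proj2 T_ore (fden m) _ (fden_T n).
by exists c, d; split=> //; [apply: T_mul (fden_T m) | apply: mn].
Qed.

Lemma frac_eq_ext m n : fden m = fden n -> fnum m = fnum n -> m ≈ n.
Proof. by move=> dE nE c d; rewrite dE nE; apply: frac_eq_refl. Qed.

Lemma frac_eq0 m n : fnum m = 0 -> fnum n = 0 -> m ≈ n.
Proof. by move=> m0 n0 c d _; rewrite m0 n0 !mulr0. Qed.

Definition frac_expand c m (Tc : T (c * fden m)) := Frac (c * fnum m) Tc.

Lemma frac_expandE c m (Tc : T (c * fden m)) : m ≈ frac_expand Tc.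
Proof. by apply: (frac_eqP (d := 1) Tc); rewrite /= mul1r. Qed.
Arguments frac_expandE {c m} Tc.

(* Equivalent fractions have a common expansion. *)
Lemma frac_eq_of_expand (F : frac -> frac) :
  (forall c m (Tc : T (c * fden m)), F m ≈ F (frac_expand Tc)) ->
  forall m n, m ≈ n -> F m ≈ F n.
Proof.
move=> Fexp m n /frac_eq_common [c [d [Tc cd cdn]]].
have Td : T (d * fden n) by rewrite -cd.
have -> : F m ≈ F (frac_expand Tc) by apply: Fexp.
have -> : frac_expand Tc = frac_expand Td.
  rewrite /frac_expand; move: Tc Td; rewrite cd cdn => Tc Td.
  by rewrite (proof_irrelevance _ Tc Td).
by symmetry; apply: Fexp.
Qed.

Definition frac0 := Frac 0 T1.

Definition frac_opp m := Frac (- fnum m) (fden_T m).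

Definition frac_add m n :=
  let p := ore_pick (fden m) (fden_T n) in
  Frac (p.1 * fnum m + p.2 * fnum n)
       (T_mul (proj1 (ore_pickP (fden m) (fden_T n))) (fden_T m)).

Definition frac_lmul r m :=
  let p := ore_pick r (fden_T m) in Frac (p.2 * fnum m) (proj1 (ore_pickP r (fden_T m))).

Definition frac_linv s (Ts : T s) m := Frac (fnum m) (T_mul (fden_T m) Ts).

Lemma frac_addE m n c d (Tc : T (c * fden m)) : c * fden m = d * fden n ->
  frac_add m n ≈ Frac (c * fnum m + d * fnum n) Tc.
Proof.
move=> cd; have [Tp pE] := ore_pickP (fden m) (fden_T n).
set p := ore_pick _ _ in Tp pE *.
have [e [f [Te ef]]] := proj2 T_ore (p.1 * fden m) _ Tc.
apply: (frac_eqP (c := e) (d := f)) => //=; rewrite -/p.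
  exact: T_mul Te (T_mul Tp (fden_T m)).
have ep1 : e * p.1 = f * c by apply: (rregT (fden_T m)); rewrite -!mulrA.
have ep2 : e * p.2 = f * d.
  by apply: (rregT (fden_T n)); rewrite -!mulrA -pE -cd.
by rewrite !mulrDr !mulrA ep1 ep2.
Qed.
Arguments frac_addE {m n c d} Tc.

Lemma frac_lmulE r m s' r' (Ts' : T s') : s' * r = r' * fden m ->
  frac_lmul r m ≈ Frac (r' * fnum m) Ts'.
Proof.
move=> sr; have [Tp pE] := ore_pickP r (fden_T m).
set p := ore_pick _ _ in Tp pE *.
have [e [f [Te ef]]] := proj2 T_ore p.1 _ Ts'.
apply: (frac_eqP (c := e) (d := f)) => //=; rewrite -/p; first exact: T_mul.
have ep : e * p.2 = f * r'.
  by apply: (rregT (fden_T m)); rewrite -!mulrA -pE -sr !mulrA ef.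
by rewrite !mulrA ep.
Qed.
Arguments frac_lmulE {r m s' r'} Ts'.

Lemma frac_add_sameden m n (mn : fden m = fden n) :
  frac_add m n ≈ Frac (fnum m + fnum n) (fden_T m).
Proof.
have T1m : T (1 * fden m) by rewrite mul1r; apply: fden_T.
rewrite (frac_addE (d := 1) T1m); last by rewrite !mul1r.
by apply: frac_eq_ext; rewrite /= !mul1r.
Qed.

Lemma frac_add_eql m m' n : m ≈ m' -> frac_add m n ≈ frac_add m' n.
Proof.
move: m m'; apply: (frac_eq_of_expand (F := frac_add^~ n)) => c m Tc /=.
have [Tp pE] := ore_pickP (fden (frac_expand Tc)) (fden_T n).
set p := ore_pick _ _ in Tp pE *.
have Tpc : T (p.1 * c * fden m) by rewrite -mulrA; apply: T_mul.
rewrite (frac_addE (d := p.2) Tpc); last by rewrite -mulrA.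
by apply: frac_eq_ext; rewrite /= -/p !mulrA.
Qed.

Lemma frac_add_comm m n : frac_add m n ≈ frac_add n m.
Proof.
have [Tp pE] := ore_pickP (fden m) (fden_T n).
set p := ore_pick _ _ in Tp pE *.
have Tq : T (p.2 * fden n) by rewrite -pE; apply: T_mul (fden_T m).
symmetry; rewrite (frac_addE (d := p.1) Tq) //.
by apply: frac_eq_ext; rewrite /= -/p ?pE // addrC.
Qed.

Lemma frac_add_eq m m' n n' : m ≈ m' -> n ≈ n' -> frac_add m n ≈ frac_add m' n'.
Proof.
move=> mm' nn'; transitivity (frac_add m' n); first exact: frac_add_eql.
by rewrite (@frac_add_comm m' n) (@frac_add_comm m' n'); apply: frac_add_eql.
Qed.

Add Morphism frac_add with signature frac_eq ==> frac_eq ==> frac_eq as frac_add_mor.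
Proof. by move=> m m' mm' n n'; apply: frac_add_eq. Qed.

Lemma frac_addA m n k : frac_add (frac_add m n) k ≈ frac_add m (frac_add n k).
Proof.
have [c0 [d0 [Tc0 cd0]]] := proj2 T_ore (fden m) _ (fden_T n).
have [c1 [e [Tc1 c1e]]] := proj2 T_ore (c0 * fden m) _ (fden_T k).
have Tm : T (c1 * c0 * fden m) by rewrite -mulrA; apply: T_mul Tc1 (T_mul Tc0 (fden_T m)).
have Tn : T (c1 * d0 * fden n) by rewrite -mulrA -cd0 mulrA.
have Tk : T (e * fden k) by rewrite -c1e mulrA.
rewrite (frac_expandE Tm) (frac_expandE Tn) (frac_expandE Tk).
set M := frac_expand Tm; set N := frac_expand Tn; set K := frac_expand Tk.
have MN : fden M = fden N by rewrite /= -!mulrA cd0.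
have MK : fden M = fden K by rewrite /= -mulrA c1e.
have NK : fden N = fden K by rewrite -MN.
rewrite (frac_add_sameden MN) frac_add_sameden; last exact: MK.
rewrite (frac_add_sameden NK) frac_add_sameden; last exact: MN.
by apply: frac_eq_ext; rewrite //= addrA.
Qed.

Lemma frac_add0 m : frac_add frac0 m ≈ m.
Proof.
have Tm : T (fden m * fden frac0) by rewrite mulr1; apply: fden_T.
rewrite (frac_addE (d := 1) Tm); last by rewrite /= mulr1 mul1r.
by apply: frac_eq_ext; rewrite /= ?mulr1 // mulr0 add0r mul1r.
Qed.

Lemma frac_addN m : frac_add (frac_opp m) m ≈ frac0.
Proof. by rewrite frac_add_sameden //; apply: frac_eq0; rewrite /= ?addNr. Qed.

Lemma frac_opp_eq m n : m ≈ n -> frac_opp m ≈ frac_opp n.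
Proof. by move=> mn c d /mn /= cd; rewrite !mulrN cd. Qed.

Add Morphism frac_opp with signature frac_eq ==> frac_eq as frac_opp_mor.
Proof. exact: frac_opp_eq. Qed.

Lemma frac_oppD m n : frac_opp (frac_add m n) ≈ frac_add (frac_opp m) (frac_opp n).
Proof. by apply: frac_eq_ext; rewrite //= opprD !mulrN. Qed.

Lemma frac_lmul_eq r m n : m ≈ n -> frac_lmul r m ≈ frac_lmul r n.
Proof.
move: m n; apply: (frac_eq_of_expand (F := frac_lmul r)) => c m Tc.
have [Tq qE] := ore_pickP r (fden_T (frac_expand Tc)).
set q := ore_pick _ _ in Tq qE *.
rewrite (frac_lmulE (r' := q.2 * c) Tq); last by rewrite qE mulrA.
by apply: frac_eq_ext; rewrite /= -/q ?mulrA.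
Qed.

Lemma frac_lmulDr r m n :
  frac_lmul r (frac_add m n) ≈ frac_add (frac_lmul r m) (frac_lmul r n).
Proof.
have [Tp pE] := ore_pickP (fden m) (fden_T n).
set p := ore_pick _ _ in Tp pE *.
have [Tq qE] := ore_pickP r (fden_T (frac_add m n)).
set q := ore_pick _ _ in Tq qE *.
rewrite (frac_lmulE (r' := q.2 * p.1) Tq (m := m)); last by rewrite qE /= -/p mulrA.
rewrite (frac_lmulE (r' := q.2 * p.2) Tq (m := n)); last by rewrite qE /= -/p -mulrA pE.
rewrite (@frac_add_sameden (Frac _ Tq) (Frac _ Tq)) //.
by apply: frac_eq_ext; rewrite /= -/p -/q ?mulrDr ?mulrA.
Qed.

Lemma frac_lmulDl a b m :
  frac_lmul (a + b) m ≈ frac_add (frac_lmul a m) (frac_lmul b m).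
Proof.
have [Tp pE] := ore_pickP a (fden_T m); set p := ore_pick _ _ in Tp pE *.
have [Tq qE] := ore_pickP b (fden_T m); set q := ore_pick _ _ in Tq qE *.
have [To oE] := ore_pickP p.1 (fden_T (frac_lmul b m)).
set o := ore_pick _ _ in To oE *.
have Tw : T (o.1 * p.1) by apply: T_mul.
rewrite (frac_lmulE (r' := o.1 * p.2 + o.2 * q.2) Tw); last first.
  by rewrite mulrDr {2}oE -!mulrA pE qE !mulrA mulrDl.
by apply: frac_eq_ext; rewrite /= -/p -/q -/o ?mulrDl ?mulrA.
Qed.

Lemma frac_lmulM a b m : frac_lmul (a * b) m ≈ frac_lmul a (frac_lmul b m).
Proof.
have [Tq qE] := ore_pickP b (fden_T m); set q := ore_pick _ _ in Tq qE *.
have [Tp pE] := ore_pickP a (fden_T (frac_lmul b m)).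
set p := ore_pick _ _ in Tp pE *.
rewrite (frac_lmulE (r' := p.2 * q.2) Tp); last by rewrite mulrA pE -mulrA qE mulrA.
by apply: frac_eq_ext; rewrite /= -/p -/q ?mulrA.
Qed.

Lemma frac_lmul1 m : frac_lmul 1 m ≈ m.
Proof.
rewrite (frac_lmulE (r' := 1) (fden_T m)); last by rewrite mulr1 mul1r.
by apply: frac_eq_ext; rewrite /= ?mul1r.
Qed.

Lemma frac_lmul0 m : frac_lmul 0 m ≈ frac0.
Proof.
rewrite (frac_lmulE (r' := 0) T1); last by rewrite mulr0 mul0r.
by apply: frac_eq0; rewrite /= ?mul0r.
Qed.

Lemma frac_lmulN a m : frac_lmul (- a) m ≈ frac_opp (frac_lmul a m).
Proof.
have [Tp pE] := ore_pickP a (fden_T m); set p := ore_pick _ _ in Tp pE *.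
rewrite (frac_lmulE (r' := - p.2) Tp); last by rewrite mulrN pE mulNr.
by apply: frac_eq_ext; rewrite /= -/p ?mulNr.
Qed.

Lemma frac_linv_eq s (Ts : T s) m n : m ≈ n -> frac_linv Ts m ≈ frac_linv Ts n.
Proof. by move=> mn c d /=; rewrite !mulrA => /(rregT Ts); apply: mn. Qed.

Lemma frac_linvD s (Ts : T s) m n :
  frac_linv Ts (frac_add m n) ≈ frac_add (frac_linv Ts m) (frac_linv Ts n).
Proof.
have [Tp pE] := ore_pickP (fden m) (fden_T n); set p := ore_pick _ _ in Tp pE *.
have Tw : T (p.1 * fden (frac_linv Ts m)).
  by rewrite /= mulrA; apply: (fden_T (frac_linv Ts (frac_add m n))).
symmetry; rewrite (frac_addE (d := p.2) Tw); last by rewrite /= !mulrA pE.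
by apply: frac_eq_ext; rewrite /= -/p ?mulrA.
Qed.

Lemma frac_lmul_linv s (Ts : T s) m : frac_lmul s (frac_linv Ts m) ≈ m.
Proof.
rewrite (frac_lmulE (r' := 1) (fden_T m)); last by rewrite mul1r.
by apply: frac_eq_ext; rewrite /= ?mul1r.
Qed.

Lemma frac_linv_lmul s (Ts : T s) m : frac_linv Ts (frac_lmul s m) ≈ m.
Proof.
have [Tp pE] := ore_pickP s (fden_T m); set p := ore_pick _ _ in Tp pE *.
apply: (frac_eqP (c := 1) (d := p.2)); rewrite /= -/p ?mul1r //.
exact: T_mul.
Qed.

Lemma frac_add_ACA m n k l :
  frac_add (frac_add m n) (frac_add k l) ≈ frac_add (frac_add m k) (frac_add n l).
Proof.
rewrite !frac_addA; apply: frac_add_eq; first reflexivity.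
by rewrite -!frac_addA (@frac_add_comm n k).
Qed.

Section Action.

Variables (R : pzRingType) (S : R -> Prop) (pid : {rmorphism R -> A}).
Hypothesis S_T : forall s, S s -> T (pid s).

Fixpoint frac_act (t : rterm S) : frac -> frac :=
  match t with
  | tC r => frac_lmul (pid r)
  | tX s => frac_linv (S_T (proj2_sig s))
  | t0 => fun=> frac0
  | t1 => id
  | tAdd t u => fun m => frac_add (frac_act t m) (frac_act u m)
  | tOpp t => fun m => frac_opp (frac_act t m)
  | tMul t u => fun m => frac_act t (frac_act u m)
  end.

Lemma frac_act_compat t :
  (forall m n, m ≈ n -> frac_act t m ≈ frac_act t n) /\
  (forall m n, frac_act t (frac_add m n) ≈ frac_add (frac_act t m) (frac_act t n)).
Proof.
elim: t => [r|[s Ss]|||t [eqt addt] u [equ addu]|t [eqt addt]|t [eqt addt] u [equ addu]] /=.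
- by split=> *; [apply: frac_lmul_eq | apply: frac_lmulDr].
- by split=> *; [apply: frac_linv_eq | apply: frac_linvD].
- by split=> *; [reflexivity | rewrite frac_add0].
- by split=> [m n mn|m n]; [exact: mn | reflexivity].
- split=> [m n mn|m n]; first by rewrite (eqt _ _ mn) (equ _ _ mn).
  by rewrite addt addu frac_add_ACA.
- by split=> [m n mn|m n]; [rewrite (eqt _ _ mn) | rewrite addt frac_oppD].
- split=> [m n mn|m n]; first exact/eqt/equ.
  transitivity (frac_act t (frac_add (frac_act u m) (frac_act u n))).
    exact/eqt/addu.
  exact: addt.
Qed.

Lemma frac_act_req t u : req t u -> forall m, frac_act t m ≈ frac_act u m.
Proof.
elim=> {t u} /=; try by move=> *; reflexivity.
- by move=> t u _ tu m; symmetry.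
- by move=> t u v _ tu _ uv m; rewrite tu.
- by move=> t t' u u' _ tt' _ uu' m; rewrite tt' uu'.
- by move=> t t' _ tt' m; rewrite tt'.
- move=> t t' u u' _ tt' _ uu' m.
  by rewrite -tt'; apply: (proj1 (frac_act_compat t)).
- by move=> t u v m; symmetry; apply: frac_addA.
- by move=> t u m; apply: frac_add_comm.
- by move=> t m; apply: frac_add0.
- by move=> t m; apply: frac_addN.
- by move=> t u v m; apply: (proj2 (frac_act_compat t)).
- by move=> m; rewrite rmorph0; apply: frac_lmul0.
- by move=> m; rewrite rmorph1; apply: frac_lmul1.
- by move=> a b m; rewrite rmorphD; apply: frac_lmulDl.
- by move=> a m; rewrite rmorphN; apply: frac_lmulN.
- by move=> a b m; rewrite rmorphM; apply: frac_lmulM.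
- by case=> s Ss m; apply: frac_lmul_linv.
- by case=> s Ss m; apply: frac_linv_lmul.
Qed.

Lemma ass_sub_ker_frac r : ass S r -> pid r = 0.
Proof.
have [Tp pE] := ore_pickP (pid r) T1.
move=> /frac_act_req /(_ (Frac 1 T1) 1 (ore_pick (pid r) T1).1) /=.
rewrite !mul1r !mulr1 mulr0 => /(_ erefl) p0.
by apply: (lregT Tp); rewrite pE p0 mul0r mulr0.
Qed.

End Action.

End OreFractions.

Lemma ass_sub_ker_Den st (R A : pzRingType) (S : R -> Prop) (pid : {rmorphism R -> A}) :
  Den st (img pid S) -> forall r, ass S r -> pid r = 0.
Proof.
move=> /Den_left_den [[Tore _] Treg] r; apply: (ass_sub_ker_frac Tore Treg).
by move=> s Ss; exists s.
Qed.

Section ImageOfMultSet.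

Variables (R A : pzRingType) (S k : R -> Prop) (p : {rmorphism R -> A}).
Hypothesis p_surj : surj p.
Hypothesis p_ker : forall r, p r = 0 <-> k r.
Hypothesis S_mult : mult_set S.
Hypothesis S_k : forall s, S s -> ~ k s.
Hypothesis k_lcancel : forall s r, S s -> k (s * r) -> k r.
Hypothesis k_rcancel : forall s r, S s -> k (r * s) -> k r.

Lemma img_mult_set : mult_set (img p S).
Proof.
case: S_mult => SM S1 _; split.
- move=> _ _ [x [Sx <-]] [y [Sy <-]].
  by exists (x * y); rewrite rmorphM; split=> //; apply: SM.
- by exists 1; rewrite rmorph1.
- by case=> s [Ss /p_ker]; apply: S_k.
Qed.

Lemma img_reg t : img p S t -> GRing.lreg t /\ GRing.rreg t.
Proof.
case=> s [Ss <-]; split=> x y; have [x' <-] := p_surj x; have [y' <-] := p_surj y.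
  move=> /eqP; rewrite -subr_eq0 -!rmorphM -rmorphB -mulrBr => /eqP /p_ker /(k_lcancel Ss).
  by move=> /p_ker /eqP; rewrite rmorphB subr_eq0 => /eqP.
move=> /eqP; rewrite -subr_eq0 -!rmorphM -rmorphB -mulrBl => /eqP /p_ker /(k_rcancel Ss).
by move=> /p_ker /eqP; rewrite rmorphB subr_eq0 => /eqP.
Qed.

Lemma img_left_den :
  (forall r s, S s -> exists s' r', S s' /\ k (s' * r - r' * s)) -> left_den (img p S).
Proof.
move=> ore; split; first split; first exact: img_mult_set.
  move=> r _ [s [Ss <-]]; have [r0 <-] := p_surj r.
  have [s' [r' [Ss' /p_ker]]] := ore r0 s Ss.
  rewrite rmorphB !rmorphM => /eqP; rewrite subr_eq0 => /eqP E.
  by exists (p s'), (p r'); split=> //; exists s'.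
move=> r t St rt0; exists 1; split; first by exists 1; rewrite rmorph1; case: S_mult.
by rewrite mul1r; apply: (proj2 (img_reg St)); rewrite rt0 mul0r.
Qed.

Lemma img_right_den :
  (forall r s, S s -> exists s' r', S s' /\ k (r * s' - s * r')) -> right_den (img p S).
Proof.
move=> ore; split; first split; first exact: img_mult_set.
  move=> r _ [s [Ss <-]]; have [r0 <-] := p_surj r.
  have [s' [r' [Ss' /p_ker]]] := ore r0 s Ss.
  rewrite rmorphB !rmorphM => /eqP; rewrite subr_eq0 => /eqP E.
  by exists (p s'), (p r'); split=> //; exists s'.
move=> r t St tr0; exists 1; split; first by exists 1; rewrite rmorph1; case: S_mult.
by rewrite mulr1; apply: (proj1 (img_reg St)); rewrite tr0 mulr0.
Qed.

End ImageOfMultSet.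

Lemma left_fractions_eq0 (A Q : pzRingType) (T : A -> Prop) (sg : {rmorphism A -> Q}) :
  left_fractions T sg -> (forall t, T t -> GRing.lreg t) -> forall a, sg a = 0 <-> a = 0.
Proof.
case=> _ _ sg_ker T_lreg a; split=> [/sg_ker [t [Tt ta0]]|->]; last exact: rmorph0.
by apply: (T_lreg t Tt); rewrite ta0 mulr0.
Qed.

Section FractionsLift.

Variables (R Rb P Q : pzRingType) (S k : R -> Prop).
Variables (pi : {rmorphism R -> Rb}) (f : {rmorphism R -> P}) (sg : {rmorphism Rb -> Q}).
Hypothesis pi_surj : surj pi.
Hypothesis pi_ker : forall r, pi r = 0 <-> k r.
Hypothesis Sb_ore : left_ore (img pi S).
Hypothesis sg_frac : left_fractions (img pi S) sg.
Hypothesis f_unit : forall s, S s -> exists v, is_inverse v (f s).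
Hypothesis k_f : forall r, k r -> f r = 0.

Lemma fractions_lift : exists phi : {rmorphism Q -> P},
  [/\ forall s r u v, S s -> is_inverse u (sg (pi s)) -> is_inverse v (f s) ->
        phi (u * sg (pi r)) = v * f r,
      (forall q : P, exists s r v, [/\ S s, is_inverse v (f s) & q = v * f r]) -> surj phi
    & forall q, phi q = 0 <->
        exists s r u, [/\ S s, f r = 0, is_inverse u (sg (pi s)) & q = u * sg (pi r)]].
Proof.
have [h hE] : exists h : {rmorphism Rb -> P}, forall r, h (pi r) = f r.
  by apply: rmorph_factor => // r /pi_ker /k_f.
have h_unit t : img pi S t -> exists v, is_inverse v (h t).
  by case=> s [Ss <-]; rewrite hE; apply: f_unit.
have [phi phiE] := left_fractions_lift Sb_ore sg_frac h_unit.
have phiE' s r u v : S s -> is_inverse u (sg (pi s)) -> is_inverse v (f s) ->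
    phi (u * sg (pi r)) = v * f r.
  move=> Ss Hu Hv; rewrite -hE; apply: (phiE (pi s)) => //; first by exists s.
  by rewrite hE.
have sg_unit s : S s -> exists u, is_inverse u (sg (pi s)).
  by move=> Ss; case: sg_frac => unit _ _; apply: unit; exists s.
exists phi; split=> // [P_frac q|q].
  have [s [r [v [Ss Hv ->]]]] := P_frac q; have [u Hu] := sg_unit s Ss.
  by exists (u * sg (pi r)); apply: (phiE' s).
split=> [|[s [r [u [Ss fr0 Hu ->]]]]]; last first.
  by have [v Hv] := f_unit Ss; rewrite (phiE' s r u v Ss Hu Hv) fr0 mulr0.
case: sg_frac => _ /(_ q) [_ [b [u [[s [Ss <-]] Hu ->]]]] _.
have [r <-] := pi_surj b; have [v Hv] := f_unit Ss.
rewrite (phiE' s r u v Ss Hu Hv) => /(is_inverse_mulr_eq0 (is_inverse_sym Hv)) fr0.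
by exists s, r, u.
Qed.

End FractionsLift.

Lemma ass_sub_ker_units (R P : pzRingType) (S : R -> Prop) (f : {rmorphism R -> P}) :
  (forall s, S s -> exists v, is_inverse v (f s)) -> forall r, ass S r -> f r = 0.
Proof.
move=> f_unit r /(eval_term_req (iv := fun s => inv_of (f s))) /= -> //.
by move=> s /f_unit /inv_ofP.
Qed.

Lemma in_L_left_localizable st (R : pzRingType) (S a : R -> Prop) :
  in_L st S a -> left_localizable S.
Proof. by case: st => [[]|[[]]]. Qed.

Section Localizable.

Variables (R : pzRingType) (S : R -> Prop).
Hypothesis S_loc : left_localizable S.

Let S_mult : mult_set S. Proof. by case: S_loc. Qed.

Section Quotient.

Variables (Rb : pzRingType) (pi : {rmorphism R -> Rb}).
Hypothesis pi_surj : surj pi.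
Hypothesis pi_ass : forall r, pi r = 0 <-> ass S r.

Let S_ass s : S s -> ~ ass S s.
Proof. by case: S_loc => _ nz _; apply: S_notin_ass. Qed.

Lemma img_reg_ass t : img pi S t -> GRing.lreg t /\ GRing.rreg t.
Proof. by apply: (img_reg pi_surj pi_ass); [apply: ass_mulSl | apply: ass_mulSr]. Qed.

Lemma img_left_den_ass : left_den (img pi S).
Proof.
apply: img_left_den pi_surj pi_ass S_mult S_ass (@ass_mulSl _ S) (@ass_mulSr _ S) _.
exact: left_localizable_ore.
Qed.

Lemma img_right_den_ass : right_localizable S -> right_den (img pi S).
Proof.
move/right_localizable_ore.
exact: img_right_den pi_surj pi_ass S_mult S_ass (@ass_mulSl _ S) (@ass_mulSr _ S).
Qed.

Lemma uloc_iso_left_fractions (Q : pzRingType) (sg : {rmorphism Rb -> Q}) :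
  left_fractions (img pi S) sg -> exists g : rterm S -> Q, uloc_R_iso (fun r => sg (pi r)) g.
Proof.
move=> sg_frac; case: (sg_frac) => sg_unit sg_repr sg_ker.
pose iv s := inv_of (sg (pi s)).
have iv_inv s : S s -> is_inverse (iv s) ((sg \o pi) s).
  by move=> Ss; apply/inv_ofP/sg_unit; exists s.
exists (eval_term (sg \o pi) iv); split=> [t u|q|//|t u //|r //].
  split=> [|tu]; first exact: eval_term_req.
  case: S_loc => _ _ /(_ (tAdd t (tOpp u))) [[s Ss] [r tuE]].
  have := eval_term_req iv_inv tuE; rewrite /= tu subrr => /esym.
  move=> /(is_inverse_mulr_eq0 (is_inverse_sym (iv_inv s Ss))) /sg_ker.
  case=> _ [[s' [Ss' <-]]]; rewrite -rmorphM => /pi_ass /(ass_mulSl Ss') rass.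
  by apply: req_subr_eq0; rewrite tuE; move: rass; rewrite /ass => ->; apply: req_mulr0.
have [_ [b [u [[s [Ss <-]] Hu ->]]]] := sg_repr q; have [r <-] := pi_surj b.
exists (tMul (tX (exist S s Ss)) (tC r)) => /=.
by rewrite (is_inverse_uniq Hu (iv_inv s Ss)).
Qed.

End Quotient.

Lemma fractions_of_generated (Q : pzRingType) (f : {rmorphism R -> Q}) :
  (forall s, S s -> exists v, is_inverse v (f s)) ->
  ring_generated_by
    (fun q : Q => (exists r, q = f r) \/ (exists s, S s /\ is_inverse q (f s))) ->
  forall q, exists s r v, [/\ S s, is_inverse v (f s) & q = v * f r].
Proof.
move=> f_unit gen; have [SM S1 _] := S_mult.
have ore r s : S s -> exists s' r', S s' /\ f s' * f r = f r' * f s.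
  move=> /(left_localizable_ore S_loc r) [s' [r' [Ss' /(ass_sub_ker_units f_unit)]]].
  by move=> /eqP; rewrite rmorphB !rmorphM subr_eq0 => /eqP; exists s', r'.
apply: gen; last first.
  move=> q [[r ->]|[s [Ss Hq]]]; last by exists s, 1, q; rewrite rmorph1 mulr1.
  by exists 1, r, 1; rewrite rmorph1 mul1r; split=> //; apply: is_inverse1.
split.
- by exists 1, 0, 1; rewrite rmorph0 rmorph1 mulr0; split=> //; apply: is_inverse1.
- by exists 1, 1, 1; rewrite rmorph1 mulr1; split=> //; apply: is_inverse1.
- move=> _ _ [s1 [r1 [v1 [Ss1 Hv1 ->]]]] [s2 [r2 [v2 [Ss2 Hv2 ->]]]].
  have [c [d [Sc cd]]] := ore s1 s2 Ss2; have Sw := SM _ _ Sc Ss1.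
  have [W HW] := f_unit _ Sw; have HW' := HW; rewrite rmorphM in HW'.
  have [Wc Wd] := inverse_common_multiple HW' Hv1 Hv2 cd.
  exists (c * s1), (c * r1 - d * r2), W; split=> //.
  by rewrite rmorphB !rmorphM mulrBr !mulrA Wc Wd.
- move=> _ _ [s1 [r1 [v1 [Ss1 Hv1 ->]]]] [s2 [r2 [v2 [Ss2 Hv2 ->]]]].
  have [c [d [Sc cd]]] := ore r1 s2 Ss2; have Sw := SM _ _ Sc Ss1.
  have [W HW] := f_unit _ Sw; have HW' := HW; rewrite rmorphM in HW'.
  have Wd := inverse_ore_swap HW' Hv1 Hv2 cd.
  exists (c * s1), (d * r2), W; split=> //.
  by rewrite rmorphM [RHS]mulrA Wd !mulrA.
Qed.

End Localizable.

Lemma Den_img_in_L st (R Rb : pzRingType) (S a : R -> Prop) (pi : {rmorphism R -> Rb}) :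
  in_L st S a -> surj pi -> (forall r, pi r = 0 <-> a r) -> Den st (img pi S).
Proof.
move=> HS pi_surj pi_a; have S_loc := in_L_left_localizable HS.
have pi_ass r : pi r = 0 <-> ass S r := iff_trans (pi_a r) (proj2 HS r).
split; last exact: img_reg_ass pi_surj pi_ass.
case: st HS => [_|[[_ S_rloc] _]]; first exact: img_left_den_ass.
by split; [apply: img_left_den_ass | apply: img_right_den_ass].
Qed.

Lemma fractions_epi_of_ker_sub (R Rb Rd Q1 Q2 : pzRingType) (S k b : R -> Prop)
    (pi : {rmorphism R -> Rb}) (pid : {rmorphism R -> Rd})
    (s1 : {rmorphism Rb -> Q1}) (s2 : {rmorphism Rd -> Q2}) :
  surj pi -> (forall r, pi r = 0 <-> k r) -> left_ore (img pi S) ->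
  left_fractions (img pi S) s1 ->
  surj pid -> (forall r, pid r = 0 <-> b r) -> (forall t, img pid S t -> GRing.lreg t) ->
  left_fractions (img pid S) s2 -> (forall r, k r -> b r) ->
  exists phi : {rmorphism Q1 -> Q2},
    [/\ forall (s r : R) (u : Q1) (v : Q2), S s ->
          is_inverse u (s1 (pi s)) -> is_inverse v (s2 (pid s)) ->
          phi (u * s1 (pi r)) = v * s2 (pid r),
        surj phi
      & forall q, phi q = 0 <->
          exists (s bb : R) (u : Q1),
            [/\ S s, b bb, is_inverse u (s1 (pi s)) & q = u * s1 (pi bb)]].
Proof.
move=> pi_surj pi_k Sb_ore s1_frac pid_surj pid_b Sd_reg s2_frac kb.
have s2_unit s : S s -> exists v, is_inverse v ((s2 \o pid) s).
  by move=> Ss; case: s2_frac => unit _ _; apply: unit; exists s.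
have s2pid_eq0 r : (s2 \o pid) r = 0 <-> b r.
  by rewrite -pid_b; apply: left_fractions_eq0 s2_frac Sd_reg _.
have k_s2pid r : k r -> (s2 \o pid) r = 0 by move/kb/s2pid_eq0.
have [phi [phiE phi_surj phi_ker]] :=
  fractions_lift pi_surj pi_k Sb_ore s1_frac s2_unit k_s2pid.
exists phi; split=> // [|q].
  apply: phi_surj => q; case: s2_frac => _ /(_ q) [_ [x [v [[s [Ss <-]] Hv ->]]]] _.
  by have [r <-] := pid_surj x; exists s, r, v.
rewrite phi_ker; split=> -[s [r [u [Ss /s2pid_eq0 br Hu ->]]]]; exists s, r, u.
  by split.
by split=> //; apply/s2pid_eq0.
Qed.

Section UnitsOnS.

Variables (R : pzRingType) (Q : nzRingType) (S : R -> Prop) (f : {rmorphism R -> Q}).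
Hypothesis S_mult : mult_set S.
Hypothesis f_unit : forall s, S s -> exists v, is_inverse v (f s).
Hypothesis f_ore : forall r s, S s -> exists s' r', S s' /\ f (s' * r - r' * s) = 0.
Hypothesis f_frac : forall q : Q, exists s r v, [/\ S s, is_inverse v (f s) & q = v * f r].

Variables (Rt : pzRingType) (pit : {rmorphism R -> Rt}).
Hypothesis pit_surj : surj pit.
Hypothesis pit_f : forall r, pit r = 0 <-> f r = 0.

Let f_S_neq0 s : S s -> f s <> 0.
Proof.
move=> /f_unit [v [_ sv1]] s0; move: sv1; rewrite s0 mul0r => /esym/eqP.
by rewrite oner_eq0.
Qed.

Let f_lcancel s r : S s -> f (s * r) = 0 -> f r = 0.
Proof. by move=> /f_unit [v Hv]; rewrite rmorphM; apply: is_inverse_mulr_eq0 Hv. Qed.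

Let f_rcancel s r : S s -> f (r * s) = 0 -> f r = 0.
Proof. by move=> /f_unit [v Hv]; rewrite rmorphM; apply: is_inverse_mull_eq0 Hv. Qed.

Lemma Den_img_ker_units : Den star_l (img pit S).
Proof.
split; first exact: img_left_den pit_surj pit_f S_mult f_S_neq0 f_lcancel f_rcancel f_ore.
exact: img_reg pit_surj pit_f f_lcancel f_rcancel.
Qed.

Lemma left_fractions_ker_units_iso (Q2 : pzRingType) (s2 : {rmorphism Rt -> Q2}) :
  left_fractions (img pit S) s2 ->
  exists psi : {rmorphism Q2 -> Q}, bijective psi /\ forall r, psi (s2 (pit r)) = f r.
Proof.
move=> s2_frac; have [[St_ore _] _] := Den_img_ker_units.
have [psi [psiE psi_surj psi_ker]] :=
  fractions_lift pit_surj pit_f St_ore s2_frac f_unit (fun r fr0 => fr0).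
exists psi; split; last first.
  move=> r; have S1 : S 1 by case: S_mult.
  have one : is_inverse 1 (s2 (pit 1)) by rewrite !rmorph1; apply: is_inverse1.
  by rewrite -[s2 _]mul1r (psiE 1 r 1 1 S1 one) ?mul1r // rmorph1; apply: is_inverse1.
apply: (inj_surj_bijective 0) (psi_surj f_frac) => x y /eqP.
rewrite -subr_eq0 -rmorphB => /eqP /psi_ker [s [r [u [_ /pit_f pr0 _ xy]]]].
by apply/eqP; rewrite -subr_eq0 xy pr0 rmorph0 mulr0.
Qed.

End UnitsOnS.

Theorem theorem1p3 (R : pzRingType) (st : lstar) (S : R -> Prop) (a : R -> Prop)
  (HS : in_L st S a)
  (Rb : pzRingType) (pi : {rmorphism R -> Rb})
  (pi_surj : surj pi) (pi_ker : forall r, pi r = 0 <-> a r) :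
  let Sb := img pi S in
  (* (1) *)
  Den st Sb /\
  (* (2) R<S^-1> is R-isomorphic to Sb^-1 Rb *)
  (forall (Q1 : pzRingType) (s1 : {rmorphism Rb -> Q1}),
     left_fractions Sb s1 ->
     exists g : rterm S -> Q1, uloc_R_iso (fun r => s1 (pi r)) g) /\
  (* (3) *)
  (forall (b : R -> Prop), ideal_of b ->
   forall (Rd : pzRingType) (pid : {rmorphism R -> Rd}),
     surj pid -> (forall r, pid r = 0 <-> b r) ->
     Den st (img pid S) ->
     (forall r, a r -> b r) /\
     (forall (Q1 : pzRingType) (s1 : {rmorphism Rb -> Q1}),
        left_fractions Sb s1 ->
      forall (Q2 : pzRingType) (s2 : {rmorphism Rd -> Q2}),
        left_fractions (img pid S) s2 ->
        exists phi : {rmorphism Q1 -> Q2},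
          [/\ forall (s r : R) (u : Q1) (v : Q2), S s ->
                is_inverse u (s1 (pi s)) -> is_inverse v (s2 (pid s)) ->
                phi (u * s1 (pi r)) = v * s2 (pid r),
              surj phi
            & forall q, phi q = 0 <->
                exists (s bb : R) (u : Q1),
                  [/\ S s, b bb, is_inverse u (s1 (pi s)) & q = u * s1 (pi bb)]])) /\
  (* (3), last sentence: a is the least such ideal *)
  (ideal_of a /\
   forall (c : R -> Prop), ideal_of c ->
   forall (Rc : pzRingType) (pic : {rmorphism R -> Rc}),
     surj pic -> (forall r, pic r = 0 <-> c r) ->
     Den st (img pic S) -> forall r, a r -> c r) /\
  (* (4) *)
  (forall (Q : nzRingType) (f : {rmorphism R -> Q}),
     (forall s, S s -> exists v, is_inverse v (f s)) ->
     ring_generated_by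
       (fun q : Q => (exists r, q = f r) \/ (exists s, S s /\ is_inverse q (f s))) ->
     (* (4a) *)
     ((forall r, a r -> f r = 0) /\
      (forall (Q1 : pzRingType) (s1 : {rmorphism Rb -> Q1}),
         left_fractions Sb s1 ->
         exists phi : {rmorphism Q1 -> Q},
           [/\ forall (s r : R) (u : Q1) (v : Q), S s ->
                 is_inverse u (s1 (pi s)) -> is_inverse v (f s) ->
                 phi (u * s1 (pi r)) = v * f r,
               surj phi
             & forall q, phi q = 0 <->
                 exists (s k : R) (u : Q1),
                   [/\ S s, f k = 0, is_inverse u (s1 (pi s)) & q = u * s1 (pi k)]]) /\
      (forall q : Q, exists (s r : R) (v : Q),
         [/\ S s, is_inverse v (f s) & q = v * f r])) /\
     (* (4b) *)
     (forall (Rt : pzRingType) (pit : {rmorphism R -> Rt}),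
        surj pit -> (forall r, pit r = 0 <-> f r = 0) ->
        Den star_l (img pit S) /\
        (forall (Q2 : pzRingType) (s2 : {rmorphism Rt -> Q2}),
           left_fractions (img pit S) s2 ->
           exists psi : {rmorphism Q2 -> Q},
             bijective psi /\ forall r, psi (s2 (pit r)) = f r))).
Proof.
move=> Sb; have S_loc := in_L_left_localizable HS.
have a_ass r : a r <-> ass S r := proj2 HS r.
have pi_ass r : pi r = 0 <-> ass S r := iff_trans (pi_ker r) (a_ass r).
have [[Sb_ore _] _] := Den_left_den (Den_img_in_L HS pi_surj pi_ker).
have a_sub_Den c (Rc : pzRingType) (pic : {rmorphism R -> Rc}) :
    (forall r, pic r = 0 <-> c r) -> Den st (img pic S) -> forall r, a r -> c r.
  by move=> pic_c Dc r /a_ass /(ass_sub_ker_Den Dc) /pic_c.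
split; first exact: Den_img_in_L HS pi_surj pi_ker.
split; first by move=> Q1 s1; apply: (uloc_iso_left_fractions S_loc pi_surj pi_ass).
split.
  move=> b _ Rd pid pid_surj pid_b Dd; have ab := a_sub_Den _ _ _ pid_b Dd.
  split=> // Q1 s1 s1_frac Q2 s2 s2_frac; have [_ Sd_reg] := Den_left_den Dd.
  exact: fractions_epi_of_ker_sub pi_ker Sb_ore s1_frac pid_surj pid_b
    (fun t St => proj1 (Sd_reg t St)) s2_frac ab.
split.
  split; last by move=> c _ Rc pic _; apply: a_sub_Den.
  exact: ideal_of_iff (fun r => iff_sym (a_ass r)) (ass_ideal S).
move=> Q f f_unit f_gen; have a_f r : a r -> f r = 0.
  by move/a_ass; apply: ass_sub_ker_units.
have f_frac := fractions_of_generated S_loc f_unit f_gen.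
have f_ore r s : S s -> exists s' r', S s' /\ f (s' * r - r' * s) = 0.
  by move=> /(left_localizable_ore S_loc r) [s' [r' [Ss' /a_ass /a_f]]]; exists s', r'.
split.
  split=> //; split=> // Q1 s1 s1_frac.
  have [phi [phiE phi_surj phi_ker]] :=
    fractions_lift pi_surj pi_ker Sb_ore s1_frac f_unit a_f.
  by exists phi; split=> //; apply: phi_surj.
have S_mult : mult_set S by case: S_loc.
move=> Rt pit pit_surj pit_f; split.
  exact: (Den_img_ker_units (f := f) S_mult f_unit f_ore pit_surj pit_f).
move=> Q2 s2.
exact: (left_fractions_ker_units_iso (f := f) S_mult f_unit f_ore f_frac pit_surj pit_f).
Qed.
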